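(* Let $S$ be a set of $n\ge 3$ points in the plane in general position (no four points of $S$ cocircular, no three collinear), and for $k=1,\dots,n-1$ let $v_k$ be the number of vertices of the $k$-th order Voronoi diagram of $S$. Then for every $k\in\{1,\dots,n-1\}$, $$v_k+v_{n-k} = 4k(n-k)-2n.$$
   Context: For points $x,y$ in the plane let $h(x,y)=\{p\in\mathbb{R}^2 : d(x,p)\le d(y,p)\}$. For $A\subseteq S$ let $V(A)=\bigcap_{x\in A,\,y\in S\setminus A} h(x,y)$. The $k$-th order Voronoi diagram $V_k(S)$ is the subdivision of the plane into the nonempty regions $V(A)$ with $|A|=k$; $v_k$ is the number of vertices of this planar subdivision. *)

From HB Require Import structures.
From mathcomp Require Import all_boot all_order all_algebra.
From mathcomp Require Import reals.
Set Implicit Arguments. Unset Strict Implicit. Unset Printing Implicit Defensive.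
Import Order.TTheory GRing.Theory Num.Theory.
Local Open Scope ring_scope.

Section Voronoi.
Variable R : realType.
Notation pt := (R * R)%type.

Definition dist (x p : pt) : R :=
  Num.sqrt ((x.1 - p.1) ^+ 2 + (x.2 - p.2) ^+ 2).

Definition halfplane (x y : pt) (p : pt) : Prop := dist x p <= dist y p.

(* The point set S is given as an injective indexing P : 'I_n -> R * R,
   subsets A of S as A : {set 'I_n}.
   V(A) = intersection over x in A, y in S \ A of h(x,y). *)
Definition region (n : nat) (P : 'I_n -> pt) (A : {set 'I_n}) (p : pt) : Prop :=
  forall i j, i \in A -> j \notin A -> halfplane (P i) (P j) p.

Definition voronoi_vertex (n : nat) (P : 'I_n -> pt) (k : nat) (p : pt) : Prop :=
  exists A1 A2 A3 : {set 'I_n},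
    [/\ #|A1| = k, #|A2| = k & #|A3| = k] /\
    [/\ A1 != A2, A1 != A3 & A2 != A3] /\
    [/\ region P A1 p, region P A2 p & region P A3 p].

Definition num_vertices (n : nat) (P : 'I_n -> pt) (k v : nat) : Prop :=
  exists s : seq pt, [/\ uniq s, size s = v &
    forall p, p \in s <-> voronoi_vertex P k p].

Definition collinear (a b c : pt) : Prop :=
  exists (u v w : R), (u != 0 \/ v != 0) /\
    [/\ u * a.1 + v * a.2 = w, u * b.1 + v * b.2 = w & u * c.1 + v * c.2 = w].

Definition cocircular (a b c d : pt) : Prop :=
  exists (o : pt) (r : R), [/\ dist a o = r, dist b o = r, dist c o = r & dist d o = r].

Definition general_position (n : nat) (P : 'I_n -> pt) : Prop :=
  (forall i j l : 'I_n, uniq [:: i; j; l] -> ~ collinear (P i) (P j) (P l)) /\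
  (forall i j l m : 'I_n, uniq [:: i; j; l; m] ->
     ~ cocircular (P i) (P j) (P l) (P m)).

End Voronoi.

(* The centre of a circle through three points of S with k - 1 or k - 2 points of S inside it
   is a vertex of V_k(S), every vertex arises this way, and distinct such circles have
   distinct centres (concentric ones differ by at least three inside points, and no four points
   are cocircular); so v_k = c_(k-1) + c_(k-2), where c_j counts the circles through three points
   of S with exactly j points of S inside.
   Counting pairs of such a circle and an (m+3)-subset Q containing its three points shows that
   the binomial moments sum_j C(j,m) (c_j + c_(n-3-j)) equal C(n, m+3) times the number of
   circles through three points of Q containing none or all of the other points of Q.  That
   number is 2|Q| - 4: order Q in a generic direction and invert at a point a of Q that is not
   extreme; the circles through a become lines, and among the lines through an inverted point
   above a and one below a, exactly one has all other inverted points on its left and exactly one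
   has them all on its right (the two edges of their convex hull that cross the axis).  The moment
   transform being invertible, c_j + c_(n-3-j) = 2 (j+1) (n-2-j), and the formula follows. *)

From HB Require Import structures.
From mathcomp Require Import all_boot all_order all_algebra.
From mathcomp Require Import reals.
From mathcomp Require Import ring lra zify.
Set Implicit Arguments. Unset Strict Implicit. Unset Printing Implicit Defensive.
Import Order.TTheory GRing.Theory Num.Theory.
Local Open Scope ring_scope.

Section SupportingLines.
Variable R : realType.
Notation pt := (R * R)%type.

Definition orient (p q r : pt) : R :=
  (q.1 - p.1) * (r.2 - p.2) - (q.2 - p.2) * (r.1 - p.1).

Lemma orient_pqp p q : orient p q p = 0. Proof. by rewrite /orient; ring. Qed.
Lemma orient_pqq p q : orient p q q = 0. Proof. by rewrite /orient; ring. Qed.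

Variables (I : finType) (J : {set I}) (w : I -> pt).

Definition crossing : {set I * I} :=
  [set bc | [&& bc.1 \in J, bc.2 \in J, 0 < (w bc.1).2 & (w bc.2).2 < 0]].

(* The abscissa at which the line through [w b] and [w c] meets the x-axis. *)
Definition axis_cut (b c : I) : R :=
  ((w c).1 * (w b).2 - (w b).1 * (w c).2) / ((w b).2 - (w c).2).

Definition supports_left (b c : I) : bool :=
  [forall d, (d \in J) && (d != b) && (d != c) ==> (0 < orient (w b) (w c) (w d))].
Definition supports_right (b c : I) : bool :=
  [forall d, (d \in J) && (d != b) && (d != c) ==> (orient (w b) (w c) (w d) < 0)].

Lemma axis_cutB b c b' c' : (b, c) \in crossing -> (b', c') \in crossing ->
  axis_cut b' c' - axis_cut b c =
  ((- (w c').2) * orient (w b) (w c) (w b') + (w b').2 * orient (w b) (w c) (w c'))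
  / (((w b).2 - (w c).2) * ((w b').2 - (w c').2)).
Proof.
rewrite !inE /= => /and4P [_ _ hb hc] /and4P [_ _ hb' hc'].
have nz1 : (w b).2 - (w c).2 != 0 by rewrite subr_eq0; apply/eqP => e; lra.
have nz2 : (w b').2 - (w c').2 != 0 by rewrite subr_eq0; apply/eqP => e; lra.
by rewrite /axis_cut /orient; field; rewrite nz1 nz2.
Qed.

Lemma crossing_denom_gt0 b c b' c' : (b, c) \in crossing -> (b', c') \in crossing ->
  0 < (((w b).2 - (w c).2) * ((w b').2 - (w c').2))^-1.
Proof.
rewrite !inE /= => /and4P [_ _ hb hc] /and4P [_ _ hb' hc'].
by rewrite invr_gt0 mulr_gt0 // subr_gt0 (lt_trans hc, lt_trans hc').
Qed.

Lemma supports_left_cut_lt b c b' c' : (b, c) \in crossing -> (b', c') \in crossing ->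
  supports_left b c -> (b', c') != (b, c) -> axis_cut b c < axis_cut b' c'.
Proof.
move=> bcX bcX'; rewrite -subr_gt0 axis_cutB // pmulr_lgt0 ?crossing_denom_gt0 //.
move: bcX bcX'; rewrite !inE /= => /and4P [_ _ hb hc] /and4P [bJ' cJ' hb' hc'].
move=> /forallP left ne.
have orient_b' : b' != b -> 0 < orient (w b) (w c) (w b').
  move=> nb; have nc : b' != c by apply/eqP => e; move: hb'; rewrite e; lra.
  by have := left b'; rewrite bJ' nb nc.
have orient_c' : c' != c -> 0 < orient (w b) (w c) (w c').
  move=> nc; have nb : c' != b by apply/eqP => e; move: hc'; rewrite e; lra.
  by have := left c'; rewrite cJ' nb nc.
have [eb|nb] := eqVneq b' b.
  have nc : c' != c by apply: contraNneq ne => ->; rewrite eb.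
  by rewrite eb orient_pqp mulr0 add0r; apply: mulr_gt0; [lra | exact: orient_c'].
have [ec|nc] := eqVneq c' c.
  by rewrite ec orient_pqq mulr0 addr0; have := orient_b' nb; nra.
by have := orient_b' nb; have := orient_c' nc; nra.
Qed.

Hypothesis w_off_axis : forall i, i \in J -> (w i).2 != 0.
Hypothesis w_noncollinear : forall i j l, i \in J -> j \in J -> l \in J ->
  i != j -> i != l -> j != l -> orient (w i) (w j) (w l) != 0.

Lemma min_cut_supports_left b c : (b, c) \in crossing ->
  (forall y, y \in crossing -> axis_cut b c <= axis_cut y.1 y.2) -> supports_left b c.
Proof.
move=> bcX cut_min; have := bcX; rewrite inE /= => /and4P [bJ cJ hb hc].
have bc : b != c by apply/eqP => e; move: hb; rewrite e; lra.
apply/forallP => d; apply/implyP => /andP [/andP [dJ db] dc].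
have : orient (w b) (w c) (w d) != 0 by apply: w_noncollinear; rewrite // eq_sym.
rewrite neq_lt => /orP [neg|//]; exfalso.
have := w_off_axis dJ; rewrite neq_lt => /orP [dneg|dpos].
  have bdX : (b, d) \in crossing by rewrite inE /= bJ dJ hb dneg.
  have := cut_min _ bdX; rewrite /= -subr_ge0 axis_cutB // orient_pqp mulr0 add0r.
  by rewrite pmulr_lge0 ?crossing_denom_gt0 //; nra.
have dcX : (d, c) \in crossing by rewrite inE /= dJ cJ dpos hc.
have := cut_min _ dcX; rewrite /= -subr_ge0 axis_cutB // orient_pqq mulr0 addr0.
by rewrite pmulr_lge0 ?crossing_denom_gt0 //; nra.
Qed.

Lemma supports_leftE b0 c0 : (b0, c0) \in crossing -> exists2 m, m \in crossing &
  forall b c, (b, c) \in crossing -> supports_left b c = ((b, c) == m).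
Proof.
move=> bcX0.
case: (arg_minP (fun bc => axis_cut bc.1 bc.2) bcX0) => m mX cut_min.
exists m => // b c bcX.
have leftm : supports_left m.1 m.2.
  by apply: min_cut_supports_left; rewrite -?surjective_pairing.
apply/idP/eqP => [left|e]; last by move: leftm; rewrite -e.
apply/eqP; apply: contraT => ne.
have := supports_left_cut_lt bcX (_ : (m.1, m.2) \in crossing) left.
rewrite -surjective_pairing eq_sym => /(_ mX ne).
by rewrite ltNge (cut_min (b, c)).
Qed.

Lemma sum_supports_left b0 c0 : (b0, c0) \in crossing ->
  \sum_(b in J | 0 < (w b).2) \sum_(c in J | (w c).2 < 0) (supports_left b c : nat) = 1%N.
Proof.
move=> /supports_leftE [m mX leftE].
have := mX; rewrite inE => /and4P [m1J m2J m1p m2n].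
have inX b c : b \in J -> c \in J -> 0 < (w b).2 -> (w c).2 < 0 -> (b, c) \in crossing.
  by move=> *; rewrite inE /=; apply/and4P.
rewrite (bigD1 m.1) /=; last by rewrite m1J m1p.
rewrite (bigD1 m.2) /=; last by rewrite m2J m2n.
rewrite leftE ?inX // -surjective_pairing eqxx.
rewrite big1 => [|c /andP [/andP [cJ cn] ne]]; last first.
  by rewrite leftE ?inX //; case: eqP => // e; case/eqP: ne; rewrite -e.
rewrite big1 // => b /andP [/andP [bJ bp] ne].
rewrite big1 // => c /andP [cJ cn].
by rewrite leftE ?inX //; case: eqP => // e; case/eqP: ne; rewrite -e.
Qed.

End SupportingLines.

Lemma sum_supports (R : realType) (I : finType) (J : {set I}) (w : I -> (R * R)%type)
  (w_off_axis : forall i, i \in J -> (w i).2 != 0)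
  (w_noncollinear : forall i j l, i \in J -> j \in J -> l \in J ->
     i != j -> i != l -> j != l -> orient (w i) (w j) (w l) != 0)
  (b0 c0 : I) : b0 \in J -> c0 \in J -> 0 < (w b0).2 -> (w c0).2 < 0 ->
  \sum_(b in J | 0 < (w b).2) \sum_(c in J | (w c).2 < 0)
     ((supports_left J w b c : nat) + (supports_right J w b c : nat))%N = 2%N.
Proof.
move=> b0J c0J hb hc.
have bcX : (b0, c0) \in crossing J w by rewrite inE /= b0J c0J hb hc.
under eq_bigr => b _ do rewrite big_split.
rewrite big_split /= (sum_supports_left w_off_axis w_noncollinear bcX).
pose w' i := (- (w i).1, (w i).2).
have orient_reflect p q r :
    orient (- p.1, p.2) (- q.1, q.2) (- r.1, r.2) = - orient p q r.
  by rewrite /orient /=; ring.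
have w'_noncollinear i j l : i \in J -> j \in J -> l \in J ->
    i != j -> i != l -> j != l -> orient (w' i) (w' j) (w' l) != 0.
  by move=> *; rewrite /w' orient_reflect oppr_eq0; apply: w_noncollinear.
have bcX' : (b0, c0) \in crossing J w' by rewrite inE /= b0J c0J hb hc.
have rightE b c : supports_right J w b c = supports_left J w' b c.
  by apply: eq_forallb => d; rewrite /w' orient_reflect oppr_gt0.
under eq_bigr => b _ do under eq_bigr => c _ do rewrite rightE.
by rewrite (sum_supports_left _ w'_noncollinear bcX').
Qed.

Section Circles.
Variable R : realType.
Notation pt := (R * R)%type.
Implicit Types a b c d p q : pt.

Definition dist2 p q : R := (p.1 - q.1) ^+ 2 + (p.2 - q.2) ^+ 2.

Definition circumcenter a b c : pt :=
  let u1 := b.1 - a.1 in let u2 := b.2 - a.2 in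
  let v1 := c.1 - a.1 in let v2 := c.2 - a.2 in
  let D := 2 * (u1 * v2 - u2 * v1) in
  (a.1 + (v2 * (u1 ^+ 2 + u2 ^+ 2) - u2 * (v1 ^+ 2 + v2 ^+ 2)) / D,
   a.2 + (u1 * (v1 ^+ 2 + v2 ^+ 2) - v1 * (u1 ^+ 2 + u2 ^+ 2)) / D).

Definition invert a p : pt := ((p.1 - a.1) / dist2 p a, (p.2 - a.2) / dist2 p a).

Lemma distE p q : dist p q = Num.sqrt (dist2 p q). Proof. by []. Qed.

Lemma dist2_ge0 p q : 0 <= dist2 p q.
Proof. by rewrite /dist2 addr_ge0 // sqr_ge0. Qed.

Lemma dist_le a b p : (dist a p <= dist b p) = (dist2 a p <= dist2 b p).
Proof. by rewrite !distE ler_sqrt // dist2_ge0. Qed.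

Lemma dist2_eq0 p q : (dist2 p q == 0) = (p == q).
Proof.
apply/idP/eqP => [|->]; last by rewrite /dist2 !subrr expr0n /= addr0.
rewrite /dist2 paddr_eq0 ?sqr_ge0 // !sqrf_eq0 !subr_eq0 => /andP [/eqP h1 /eqP h2].
by rewrite [p]surjective_pairing [q]surjective_pairing h1 h2.
Qed.

Lemma dist2_gt0 p q : p != q -> 0 < dist2 p q.
Proof. by move=> h; rewrite lt_neqAle dist2_ge0 andbT eq_sym dist2_eq0. Qed.

Lemma dist2_circumcenter a b c : orient a b c != 0 ->
  dist2 b (circumcenter a b c) = dist2 a (circumcenter a b c) /\
  dist2 c (circumcenter a b c) = dist2 a (circumcenter a b c).
Proof.
rewrite /orient => h.
have D0 : (b.1 - a.1) * (c.2 - a.2) - (b.2 - a.2) * (c.1 - a.1) != 0 by [].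
by split; rewrite /dist2 /circumcenter /=; field; rewrite D0.
Qed.

Lemma circumcenter_power_invert a b c d : orient a b c != 0 -> b != a -> c != a -> d != a ->
  (dist2 d (circumcenter a b c) - dist2 a (circumcenter a b c)) * orient a b c =
  orient (invert a b) (invert a c) (invert a d) * dist2 b a * dist2 c a * dist2 d a.
Proof.
move=> h /dist2_gt0 hb /dist2_gt0 hc /dist2_gt0 hd.
move: h hb hc hd; rewrite /orient /circumcenter /invert /dist2 /= => h hb hc hd.
by field; rewrite h !gt_eqF.
Qed.

Lemma circumcenter_unique a b c p : orient a b c != 0 ->
  dist2 b p = dist2 a p -> dist2 c p = dist2 a p -> p = circumcenter a b c.
Proof.
move=> h hb hc; set o := circumcenter a b c.
have D0 : 2 * orient a b c != 0 by rewrite mulf_neq0 ?pnatr_eq0.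
have e1 : (p.1 - o.1) * (2 * orient a b c) =
    (b.2 - a.2) * (dist2 c p - dist2 a p) - (c.2 - a.2) * (dist2 b p - dist2 a p).
  by move: h; rewrite /o /orient /circumcenter /dist2 /= => h; field; rewrite h.
have e2 : (p.2 - o.2) * (2 * orient a b c) =
    (c.1 - a.1) * (dist2 b p - dist2 a p) - (b.1 - a.1) * (dist2 c p - dist2 a p).
  by move: h; rewrite /o /orient /circumcenter /dist2 /= => h; field; rewrite h.
move: e1 e2; rewrite hb hc subrr !mulr0 subrr.
move=> /eqP; rewrite mulf_eq0 (negbTE D0) orbF subr_eq0 => /eqP e1.
move=> /eqP; rewrite mulf_eq0 (negbTE D0) orbF subr_eq0 => /eqP e2.
by rewrite [p]surjective_pairing [o]surjective_pairing e1 e2.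
Qed.

End Circles.

Section EmptyFullCircles.
Variable R : realType.
Notation pt := (R * R)%type.
Variables (I : finType) (P : I -> pt) (s : R).
Notation triple := (I * (I * I))%type.

Definition height (i : I) : R := (P i).2 + s * (P i).1.

Hypothesis P_inj : injective P.
Hypothesis P_noncollinear : forall i j l, i != j -> i != l -> j != l ->
  orient (P i) (P j) (P l) != 0.
Hypothesis P_noncocircular : forall i j l m,
  i != j -> i != l -> j != l -> m != i -> m != j -> m != l ->
  dist2 (P m) (circumcenter (P i) (P j) (P l)) != dist2 (P i) (circumcenter (P i) (P j) (P l)).
Hypothesis height_inj : injective height.

(* Every triangle has exactly one encoding [(a, (b, c))]: its middle, top and bottom vertices
   in the height order. *)
Definition mid_sorted (x : triple) : bool :=
  (height x.2.2 < height x.1) && (height x.1 < height x.2.1).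
Definition tri_set (x : triple) : {set I} := [set x.1; x.2.1; x.2.2].
Definition tri_center (x : triple) : pt := circumcenter (P x.1) (P x.2.1) (P x.2.2).
Definition tri_radius2 (x : triple) : R := dist2 (P x.1) (tri_center x).

Definition circle_empty (Q : {set I}) (x : triple) : bool :=
  [forall d, (d \in Q) && (d \notin tri_set x) ==>
     (tri_radius2 x < dist2 (P d) (tri_center x))].
Definition circle_full (Q : {set I}) (x : triple) : bool :=
  [forall d, (d \in Q) && (d \notin tri_set x) ==>
     (dist2 (P d) (tri_center x) < tri_radius2 x)].

Lemma height_neq i j : i != j -> height i != height j.
Proof. by apply: contra => /eqP /height_inj ->. Qed.

Lemma height_lt_neq i j : height i < height j -> i != j.
Proof. by apply: contraTneq => ->; rewrite ltxx. Qed.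

Lemma tri_set_mem (x : triple) :
  [/\ x.1 \in tri_set x, x.2.1 \in tri_set x & x.2.2 \in tri_set x].
Proof. by rewrite /tri_set !inE !eqxx !orbT. Qed.

Lemma mid_sorted_neq x : mid_sorted x -> [/\ x.1 != x.2.1, x.1 != x.2.2 & x.2.1 != x.2.2].
Proof.
case/andP => h1 h2.
by split; [exact: height_lt_neq h2 | rewrite eq_sym; exact: height_lt_neq h1
  | rewrite eq_sym; exact: height_lt_neq (lt_trans h1 h2)].
Qed.

Lemma card_tri_set x : mid_sorted x -> #|tri_set x| = 3%N.
Proof.
move=> /mid_sorted_neq [n1 n2 n3].
by rewrite /tri_set setUC cardsU1 cards2 !inE negb_or n1 eq_sym n2 eq_sym n3.
Qed.

Definition shear (p : pt) : pt := (p.1, p.2 + s * p.1).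

Lemma orient_shear p q r : orient (shear p) (shear q) (shear r) = orient p q r.
Proof. by rewrite /orient /shear /=; ring. Qed.

Section InversionAt.
Variable a : I.

(* Inversion at [P a] turns the circles through [P a] into lines, and the shear makes the sign
   of the second coordinate record the height order relative to [a]. *)
Definition inv_at (i : I) : pt := shear (invert (P a) (P i)).

Lemma inv_at2 i : (inv_at i).2 = (height i - height a) / dist2 (P i) (P a).
Proof. by rewrite /inv_at /shear /invert /height /=; ring. Qed.

Lemma dist2_at_gt0 i : i != a -> 0 < dist2 (P i) (P a).
Proof. by move=> ia; rewrite dist2_gt0 // (inj_eq P_inj). Qed.

Lemma inv_at2_gt0 i : i != a -> (0 < (inv_at i).2) = (height a < height i).
Proof. by move=> ia; rewrite inv_at2 pmulr_lgt0 ?subr_gt0 // invr_gt0 dist2_at_gt0. Qed.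

Lemma inv_at2_lt0 i : i != a -> ((inv_at i).2 < 0) = (height i < height a).
Proof. by move=> ia; rewrite inv_at2 pmulr_llt0 ?subr_lt0 // invr_gt0 dist2_at_gt0. Qed.

Lemma tri_power_inv_at b c d : b != a -> c != a -> d != a -> b != c ->
  (dist2 (P d) (tri_center (a, (b, c))) - tri_radius2 (a, (b, c))) * orient (P a) (P b) (P c) =
  orient (inv_at b) (inv_at c) (inv_at d) *
    (dist2 (P b) (P a) * dist2 (P c) (P a) * dist2 (P d) (P a)).
Proof.
move=> ba ca da bc; rewrite /inv_at !orient_shear /tri_radius2 /tri_center /=.
rewrite circumcenter_power_invert ?(inj_eq P_inj) ?mulrA //.
by apply: P_noncollinear; rewrite // eq_sym.
Qed.

Lemma tri_side_inv_at b c d : b != a -> c != a -> d != a -> b != c ->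
  ((tri_radius2 (a, (b, c)) < dist2 (P d) (tri_center (a, (b, c)))) =
     (0 < orient (inv_at b) (inv_at c) (inv_at d) * orient (P a) (P b) (P c))) /\
  ((dist2 (P d) (tri_center (a, (b, c))) < tri_radius2 (a, (b, c))) =
     (orient (inv_at b) (inv_at c) (inv_at d) * orient (P a) (P b) (P c) < 0)).
Proof.
move=> ba ca da bc; have power := tri_power_inv_at ba ca da bc.
set D := _ - _ in power; set o := orient (P a) _ _ in power *.
set K := orient _ _ _ in power *; set pos := (_ * _ * _) in power.
have o0 : o != 0 by apply: P_noncollinear; rewrite // eq_sym.
have pos_gt0 : 0 < pos by rewrite !mulr_gt0 ?dist2_at_gt0.
have o2_gt0 : 0 < o ^+ 2 by rewrite exprn_even_gt0.
have e : D * o ^+ 2 = (K * o) * pos by rewrite expr2 mulrA power; ring.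
split; first by rewrite -subr_gt0 -/D -(pmulr_lgt0 D o2_gt0) e pmulr_lgt0.
by rewrite -subr_lt0 -/D -(pmulr_llt0 D o2_gt0) e pmulr_llt0.
Qed.

Lemma inv_at_off_axis (Q : {set I}) i : i \in Q :\ a -> (inv_at i).2 != 0.
Proof.
rewrite in_setD1 => /andP [ia _]; rewrite inv_at2 mulf_neq0 //.
  by rewrite subr_eq0 height_neq.
by rewrite invr_neq0 // gt_eqF // dist2_at_gt0.
Qed.

Lemma inv_at_noncollinear (Q : {set I}) i j l : i \in Q :\ a -> j \in Q :\ a -> l \in Q :\ a ->
  i != j -> i != l -> j != l -> orient (inv_at i) (inv_at j) (inv_at l) != 0.
Proof.
rewrite !in_setD1 => /andP [ia _] /andP [ja _] /andP [la _] ij il jl.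
have ai : a != i by rewrite eq_sym.
have aj : a != j by rewrite eq_sym.
have li : l != i by rewrite eq_sym.
have lj : l != j by rewrite eq_sym.
apply/eqP => o0; have /eqP := tri_power_inv_at ia ja la ij.
rewrite o0 mul0r mulf_eq0 subr_eq0 (negbTE (P_noncocircular ai aj ij la li lj)) /=.
by rewrite (negbTE (P_noncollinear ai aj ij)).
Qed.

Lemma circle_empty_full_at (Q : {set I}) b c : height a < height b -> height c < height a ->
  ((circle_empty Q (a, (b, c)) : nat) + circle_full Q (a, (b, c)))%N =
  ((supports_left (Q :\ a) inv_at b c : nat) + supports_right (Q :\ a) inv_at b c)%N.
Proof.
move=> hb hc; rewrite /circle_empty /circle_full /supports_left /supports_right.
have ba : b != a by rewrite eq_sym height_lt_neq.
have ca : c != a by rewrite height_lt_neq.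
have bc : b != c by rewrite eq_sym height_lt_neq // (lt_trans hc hb).
have o0 : orient (P a) (P b) (P c) != 0 by apply: P_noncollinear; rewrite // eq_sym.
have others d : (d \in Q) && (d \notin tri_set (a, (b, c))) =
    (d \in Q :\ a) && (d != b) && (d != c).
  by rewrite /tri_set !inE /=; case: (d \in Q); case: (d == a); case: (d == b); case: (d == c).
have sides d (da : d != a) := tri_side_inv_at ba ca da bc.
have [o_gt0|o_lt0] := ltP 0 (orient (P a) (P b) (P c)).
  congr (nat_of_bool _ + nat_of_bool _)%N; apply: eq_forallb => d; rewrite others;
  case: (boolP (_ && _)) => //= /andP [/andP [/setD1P [da _] _] _];
  have [eo ei] := sides d da; rewrite ?eo ?ei ?pmulr_lgt0 ?pmulr_llt0 //.
have {}o_lt0 : orient (P a) (P b) (P c) < 0 by rewrite lt_neqAle o0.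
rewrite addnC; congr (nat_of_bool _ + nat_of_bool _)%N; apply: eq_forallb => d;
rewrite others; case: (boolP (_ && _)) => //= /andP [/andP [/setD1P [da _] _] _];
have [eo ei] := sides d da; rewrite ?eo ?ei ?nmulr_lgt0 ?nmulr_llt0 //.
Qed.

End InversionAt.

Lemma sum_empty_full_at (Q : {set I}) a b0 c0 : a \in Q -> b0 \in Q -> c0 \in Q ->
  height a < height b0 -> height c0 < height a ->
  \sum_(b in Q | height a < height b) \sum_(c in Q | height c < height a)
     ((circle_empty Q (a, (b, c)) : nat) + circle_full Q (a, (b, c)))%N = 2%N.
Proof.
move=> aQ b0Q c0Q hb0 hc0.
have b0a : b0 != a by rewrite eq_sym height_lt_neq.
have c0a : c0 != a by rewrite height_lt_neq.
have := sum_supports (inv_at_off_axis (a := a) (Q := Q)) (inv_at_noncollinear (Q := Q))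
  (_ : b0 \in Q :\ a) (_ : c0 \in Q :\ a) (_ : 0 < (inv_at a b0).2) (_ : (inv_at a c0).2 < 0).
rewrite !in_setD1 b0a c0a b0Q c0Q inv_at2_gt0 // inv_at2_lt0 // => /(_ isT isT hb0 hc0) <-.
apply: eq_big => [b|b /andP [_ hb]].
  rewrite in_setD1; have [->|ba] := eqVneq b a; first by rewrite ltxx andbF.
  by rewrite inv_at2_gt0 // andbC.
apply: eq_big => [c|c /andP [_ hc]]; last exact: circle_empty_full_at.
rewrite in_setD1; have [->|ca] := eqVneq c a; first by rewrite ltxx andbF.
by rewrite inv_at2_lt0 // andbC.
Qed.

Lemma sum_mid_sorted (Q : {set I}) (F : triple -> nat) :
  \sum_(x | mid_sorted x && (tri_set x \subset Q)) F x =
  \sum_(a in Q) \sum_(b in Q | height a < height b) \sum_(c in Q | height c < height a)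
     F (a, (b, c)).
Proof.
under [RHS]eq_bigr => a _ do rewrite pair_big_dep.
rewrite pair_big_dep /=; apply: eq_big => [[a [b c]]|[a [b c]] _] //=.
rewrite /mid_sorted /tri_set !subUset !sub1set /=.
by case: (a \in Q); case: (b \in Q); case: (c \in Q);
  case: (height c < height a); case: (height a < height b).
Qed.

(* Each of the [#|Q| - 2] points of [Q] that are not extreme in height is the middle vertex of
   exactly one empty and one full circle. *)
Lemma sum_empty_full (Q : {set I}) : (2 <= #|Q|)%N ->
  \sum_(x | mid_sorted x && (tri_set x \subset Q))
    ((circle_empty Q x : nat) + circle_full Q x)%N = (2 * #|Q| - 4)%N.
Proof.
move=> Q_ge2; rewrite sum_mid_sorted.
have /set0Pn [a0 a0Q] : Q != set0 by rewrite -card_gt0 (leq_trans _ Q_ge2).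
have [lo loQ lo_min] := arg_minP height a0Q.
have [hi hiQ hi_max] := arg_maxP height a0Q.
have {}loQ : lo \in Q := loQ.
have {}hiQ : hi \in Q := hiQ.
have {}hi_max y : y \in Q -> height y <= height hi := hi_max y.
have lo_lt y : y \in Q -> y != lo -> height lo < height y.
  by move=> yQ ne; rewrite lt_neqAle lo_min // andbT height_neq // eq_sym.
have lt_hi y : y \in Q -> y != hi -> height y < height hi.
  by move=> yQ ne; rewrite lt_neqAle hi_max // andbT height_neq.
have hi_lo : hi != lo.
  have /set0Pn [y /setD1P [ylo yQ]] : Q :\ lo != set0.
    by rewrite -card_gt0; move: Q_ge2; rewrite (cardsD1 lo Q) loQ.
  by apply: contraTneq (lo_lt y yQ ylo) => <-; rewrite -leNgt hi_max.
rewrite (big_setD1 lo) //= big1 => [|b /andP [bQ hb]]; last first.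
  by rewrite big1 // => c /andP [cQ hc]; move: (lo_min c cQ); rewrite leNgt hc.
rewrite (big_setD1 hi) /=; last by rewrite in_setD1 hi_lo.
rewrite big1 => [|b /andP [bQ hb]]; last by move: (hi_max b bQ); rewrite leNgt hb.
rewrite !add0r (eq_bigr (fun _ => 2%N)) => [|a]; last first.
  rewrite !in_setD1 => /and3P [a_hi a_lo aQ].
  by apply: (sum_empty_full_at aQ hiQ loQ); [exact: lt_hi | exact: lo_lt].
rewrite sum_nat_const.
move: Q_ge2; rewrite (cardsD1 lo Q) loQ (cardsD1 hi (Q :\ lo)) in_setD1 hi_lo hiQ /=.
lia.
Qed.

End EmptyFullCircles.

Section BinomialMoments.
Local Open Scope nat_scope.

Lemma hockey_stick m K : \sum_(j < K) 'C(j.+1, m.+1) = 'C(K.+1, m.+2).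
Proof.
elim: K => [|K IH]; first by rewrite big_ord0 bin_small.
by rewrite big_ord_recr /= IH [in RHS]binS.
Qed.

Lemma sum_bin_mulS m K : \sum_(j < K) 'C(j, m) * j.+1 = m.+1 * 'C(K.+1, m.+2).
Proof.
rewrite -hockey_stick big_distrr /=; apply: eq_bigr => j _.
by rewrite mulnC -mul_bin_diag.
Qed.

Lemma sum_bin_mul_parabola N m :
  \sum_(j < N.+1) 'C(j, m) * (j.+1 * (N.+1 - j)) = m.+1 * 'C(N.+3, m.+3).
Proof.
elim: N => [|N IH].
  by rewrite big_ord1 /= muln1; case: m => [|m]; rewrite /= ?muln0 // bin_small ?muln0.
have -> : \sum_(j < N.+2) 'C(j, m) * (j.+1 * (N.+2 - j)) =
    \sum_(j < N.+2) 'C(j, m) * (j.+1 * (N.+1 - j)) + \sum_(j < N.+2) 'C(j, m) * j.+1.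
  rewrite -big_split /=; apply: eq_bigr => j _.
  have := ltn_ord j; rewrite -mulnDr => jN; congr (_ * _); nia.
rewrite (big_ord_recr N.+1) /= subnn !muln0 addn0 IH sum_bin_mulS.
by rewrite -mulnDr [in RHS]binS addnC.
Qed.

Lemma sum_bin_split N j (z : nat -> nat) : j <= N ->
  \sum_(i < N.+1) 'C(i, j) * z i = z j + \sum_(i < N.+1 | j < i) 'C(i, j) * z i.
Proof.
rewrite -ltnS => jN; rewrite (bigD1 (Ordinal jN)) //= binn mul1n; congr (_ + _).
rewrite big_mkcond [RHS]big_mkcond; apply: eq_bigr => i _.
have [lt|gt|eq] := ltngtP j i.
- by rewrite -val_eqE /= gtn_eqF.
- by rewrite bin_small // mul0n; case: ifP.
- by rewrite -val_eqE /= eq eqxx.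
Qed.

(* The binomial moment transform is unitriangular, hence injective. *)
Lemma binomial_moments_inj N (x y : nat -> nat) :
  (forall m, \sum_(j < N.+1) 'C(j, m) * x j = \sum_(j < N.+1) 'C(j, m) * y j) ->
  forall j, j <= N -> x j = y j.
Proof.
move=> moments j jN; have [d] := ubnP (N - j); elim: d j jN => // d IH j jN dj.
have := moments j; rewrite !(sum_bin_split _ jN).
rewrite (eq_bigr (fun i : 'I_N.+1 => 'C(i, j) * y i)) => [/addIn //|i ji].
have iN : i <= N by rewrite -ltnS.
by rewrite (IH i iN) //; lia.
Qed.

End BinomialMoments.

Lemma card_draws_shift (I : finType) (T S : {set I}) (m : nat) : [disjoint T & S] ->
  #|[set B : {set I} | B \subset S & #|B| == m]| =
  #|[set Q : {set I} | [&& T \subset Q, Q :\: T \subset S & #|Q| == (m + #|T|)%N]]|.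
Proof.
move=> dTS.
have dBT (B : {set I}) : B \subset S -> [disjoint B & T].
  by move=> sBS; rewrite disjoint_sym; exact: disjointWr sBS dTS.
have addTK (B : {set I}) : B \subset S -> (B :|: T) :\: T = B.
  by move=> /dBT dBT'; rewrite setDUl setDv setU0 (setDidPl dBT').
have inj : {in [set B : {set I} | B \subset S & #|B| == m] &, injective (fun B => B :|: T)}.
  by move=> B1 B2; rewrite !inE => /andP [s1 _] /andP [s2 _] e; rewrite -(addTK _ s1) e addTK.
rewrite -(card_in_imset inj); apply: eq_card => Q; rewrite [in RHS]inE.
apply/imsetP/idP => [[B] |].
  rewrite inE => /andP [sBS /eqP cB] ->.
  by rewrite subsetUr addTK // sBS cardsU (disjoint_setI0 (dBT _ sBS)) cards0 subn0 cB eqxx.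
move=> /and3P [sTQ sQS /eqP cQ]; exists (Q :\: T).
  by rewrite inE sQS /= cardsD (setIidPr sTQ) cQ; apply/eqP; lia.
apply/setP => z; rewrite !inE; have [zT|_] := boolP (z \in T); last by rewrite orbF.
by rewrite (subsetP sTQ).
Qed.

Lemma sum_group_by (T : finType) (A : pred T) (N : nat) (g : T -> nat) (F : nat -> nat) :
  (forall x, A x -> (g x <= N)%N) ->
  (\sum_(x | A x) F (g x) = \sum_(j < N.+1) F j * #|[set x | A x & g x == j]|)%N.
Proof.
move=> gN.
rewrite (eq_bigr (fun x => \sum_(j < N.+1) (g x == j) * F j)%N); last first.
  move=> x Ax; have gx : (g x < N.+1)%N by rewrite ltnS gN.
  rewrite (bigD1 (Ordinal gx)) //= eqxx mul1n big1 ?addn0 // => j.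
  by rewrite -val_eqE /= eq_sym => /negbTE ->.
rewrite exchange_big /=; apply: eq_bigr => j _.
rewrite -big_distrl /= mulnC -sum1_card; congr (_ * _)%N.
by rewrite big_mkcond [RHS]big_mkcond /=; apply: eq_bigr => x _; rewrite inE; case: (A x).
Qed.

Section CircleCounts.
Variable R : realType.
Notation pt := (R * R)%type.
Variables (I : finType) (P : I -> pt) (s : R).
Notation triple := (I * (I * I))%type.
Hypothesis P_inj : injective P.
Hypothesis P_noncollinear : forall i j l, i != j -> i != l -> j != l ->
  orient (P i) (P j) (P l) != 0.
Hypothesis P_noncocircular : forall i j l m,
  i != j -> i != l -> j != l -> m != i -> m != j -> m != l ->
  dist2 (P m) (circumcenter (P i) (P j) (P l)) != dist2 (P i) (circumcenter (P i) (P j) (P l)).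
Hypothesis height_inj : injective (height P s).

Definition inside (x : triple) : {set I} :=
  [set d | dist2 (P d) (tri_center P x) < tri_radius2 P x].
Definition outside (x : triple) : {set I} :=
  [set d | tri_radius2 P x < dist2 (P d) (tri_center P x)].

Section Triangle.
Variable x : triple.
Hypothesis x_sorted : mid_sorted P s x.

Lemma dist2_tri_center d : d \in tri_set x -> dist2 (P d) (tri_center P x) = tri_radius2 P x.
Proof.
have [n1 n2 n3] := mid_sorted_neq x_sorted.
have [eb ec] := dist2_circumcenter (P_noncollinear n1 n2 n3).
by rewrite /tri_set !inE => /orP [/orP [] |] /eqP ->.
Qed.

Lemma dist2_tri_center_neq d : d \notin tri_set x ->
  dist2 (P d) (tri_center P x) != tri_radius2 P x.
Proof.
have [n1 n2 n3] := mid_sorted_neq x_sorted.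
by rewrite /tri_set !inE !negb_or => /andP [/andP [d1 d2] d3]; apply: P_noncocircular.
Qed.

Lemma tri_set_inside d : d \in tri_set x -> d \notin inside x.
Proof. by move=> /dist2_tri_center dt; rewrite inE dt ltxx. Qed.

Lemma tri_set_outside d : d \in tri_set x -> d \notin outside x.
Proof. by move=> /dist2_tri_center dt; rewrite inE dt ltxx. Qed.

Lemma disjoint_tri_set_inside : [disjoint tri_set x & inside x].
Proof. by rewrite disjoints_subset; apply/subsetP => d /tri_set_inside; rewrite in_setC. Qed.

Lemma disjoint_tri_set_outside : [disjoint tri_set x & outside x].
Proof. by rewrite disjoints_subset; apply/subsetP => d /tri_set_outside; rewrite in_setC. Qed.

Lemma card_inside_outside : (#|inside x| + #|outside x| + 3 = #|I|)%N.
Proof.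
rewrite -(card_tri_set x_sorted) -cardsT.
have -> : [set: I] = (inside x :|: outside x) :|: tri_set x.
  apply/setP => d; rewrite in_setT in_setU; apply/esym.
  case: (boolP (d \in tri_set x)) => [_|dt]; first by rewrite orbT.
  by rewrite orbF !inE -neq_lt dist2_tri_center_neq.
rewrite !cardsU.
have -> : inside x :&: outside x = set0.
  by apply/setP => d; rewrite !inE; apply/negP => /andP [h1 /(lt_trans h1)]; rewrite ltxx.
have -> : (inside x :|: outside x) :&: tri_set x = set0.
  apply/setP => d; rewrite in_setI in_setU in_set0.
  case: (boolP (d \in tri_set x)) => dt; rewrite ?andbF // andbT.
  by rewrite (negbTE (tri_set_inside dt)) (negbTE (tri_set_outside dt)).
by rewrite !cards0 !subn0.
Qed.

Lemma circle_fullE (Q : {set I}) : circle_full P Q x = (Q :\: tri_set x \subset inside x).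
Proof.
apply/forallP/subsetP => [full d|sub d].
  rewrite in_setD => /andP [dt dQ]; rewrite inE; apply: (implyP (full d)); exact/andP.
apply/implyP => /andP [dQ dt]; have := sub d; rewrite in_setD dQ andbT => /(_ dt).
by rewrite inE.
Qed.

Lemma circle_emptyE (Q : {set I}) : circle_empty P Q x = (Q :\: tri_set x \subset outside x).
Proof.
apply/forallP/subsetP => [empty d|sub d].
  rewrite in_setD => /andP [dt dQ]; rewrite inE; apply: (implyP (empty d)); exact/andP.
apply/implyP => /andP [dQ dt]; have := sub d; rewrite in_setD dQ andbT => /(_ dt).
by rewrite inE.
Qed.

Lemma bin_card_inside m : 'C(#|inside x|, m) =
  (\sum_(Q : {set I} | #|Q| == (m + 3)%N)
     ((tri_set x \subset Q) && circle_full P Q x : nat))%N.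
Proof.
rewrite -cards_draws (card_draws_shift m disjoint_tri_set_inside) (card_tri_set x_sorted).
rewrite -sum1_card big_mkcond /=.
rewrite [RHS]big_mkcond; apply: eq_bigr => Q _; rewrite inE circle_fullE.
by case: (tri_set x \subset Q); case: (Q :\: tri_set x \subset _); case: (#|Q| == _).
Qed.

Lemma bin_card_outside m : 'C(#|outside x|, m) =
  (\sum_(Q : {set I} | #|Q| == (m + 3)%N)
     ((tri_set x \subset Q) && circle_empty P Q x : nat))%N.
Proof.
rewrite -cards_draws (card_draws_shift m disjoint_tri_set_outside) (card_tri_set x_sorted).
rewrite -sum1_card big_mkcond /=.
rewrite [RHS]big_mkcond; apply: eq_bigr => Q _; rewrite inE circle_emptyE.
by case: (tri_set x \subset Q); case: (Q :\: tri_set x \subset _); case: (#|Q| == _).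
Qed.

End Triangle.

(* Both sides count the pairs of a triangle and an [(m + 3)]-set [Q] containing it whose
   circumcircle is full or empty relative to [Q]. *)
Lemma binomial_moment_circles m :
  (\sum_(x | mid_sorted P s x) ('C(#|inside x|, m) + 'C(#|outside x|, m)) =
   'C(#|I|, m + 3) * (2 * m + 2))%N.
Proof.
rewrite (eq_bigr (fun x => \sum_(Q : {set I} | #|Q| == (m + 3)%N)
    ((tri_set x \subset Q) && circle_full P Q x +
     (tri_set x \subset Q) && circle_empty P Q x))%N); last first.
  by move=> x x_sorted; rewrite bin_card_inside // bin_card_outside // big_split.
rewrite exchange_big /= -card_draws -sum1_card big_distrl /=.
apply: eq_big => [Q|Q /eqP cardQ]; first by rewrite inE.
have Q_ge2 : (2 <= #|Q|)%N by rewrite cardQ addnC.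
have := sum_empty_full P_inj P_noncollinear P_noncocircular height_inj Q_ge2.
rewrite cardQ (_ : (2 * (m + 3) - 4 = 2 * m + 2)%N); last by lia.
move=> <-; rewrite mul1n [RHS]big_mkcond [LHS]big_mkcond; apply: eq_bigr => x _.
by case: (mid_sorted P s x); case: (_ \subset _);
  case: (circle_full _ _ _); case: (circle_empty _ _ _).
Qed.

(* Triangles whose circumcircle encloses exactly [i - 1] points; the shift makes
   [nlevel 0 = 0]. *)
Definition nlevel (i : nat) : nat :=
  #|[set x | mid_sorted P s x & (#|inside x|).+1 == i]|.

Lemma nlevel_moment_sym N : #|I| = N.+3 -> forall j, (j <= N)%N ->
  (nlevel j.+1 + nlevel (N - j).+1 = 2 * (j.+1 * (N.+1 - j)))%N.
Proof.
move=> cardI; apply: (@binomial_moments_inj N (fun j => nlevel j.+1 + nlevel (N - j).+1)%N).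
move=> m.
have inside_le x : mid_sorted P s x -> (#|inside x| <= N)%N.
  by move=> /card_inside_outside; rewrite cardI; lia.
have outsideE x : mid_sorted P s x -> #|outside x| = (N - #|inside x|)%N.
  by move=> /card_inside_outside; rewrite cardI; lia.
have nlevelE j : #|[set x | mid_sorted P s x & #|inside x| == j]| = nlevel j.+1.
  by apply: eq_card => x; rewrite !inE.
have := binomial_moment_circles m; rewrite big_split /=.
rewrite (sum_group_by (fun k => 'C(k, m)) inside_le).
rewrite (eq_bigr (fun x => 'C(N - #|inside x|, m))); last by move=> x /outsideE ->.
rewrite (sum_group_by (fun k => 'C(N - k, m)) inside_le).
rewrite [X in (_ + X)%N](reindex_inj rev_ord_inj) /=.
rewrite [X in (_ + X)%N](eq_bigr (fun j : 'I_N.+1 => 'C(j, m) * nlevel (N - j).+1)%N);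
  last first.
  by move=> j _; rewrite subSS nlevelE subKn // -ltnS.
under eq_bigr => j _ do rewrite nlevelE.
rewrite -big_split /= cardI => moment.
under eq_bigr => j _ do rewrite mulnDr.
rewrite moment addn3 (_ : (2 * m + 2 = 2 * m.+1)%N); last by lia.
rewrite mulnC -mulnA -sum_bin_mul_parabola big_distrr /=.
by apply: eq_bigr => j _; lia.
Qed.

Lemma nlevel_eq0 i : (#|I|.-1 <= i)%N || (i == 0)%N -> nlevel i = 0%N.
Proof.
move=> i_out; apply/eqP; rewrite cards_eq0; apply/eqP/setP => x; rewrite !inE.
apply/negP => /andP [x_sorted /eqP ix]; move: i_out; rewrite -ix.
by have := card_inside_outside x_sorted; lia.
Qed.

Lemma nlevel_sym i : (3 <= #|I|)%N ->
  (nlevel i + nlevel (#|I|.-1 - i) = 2 * i * (#|I|.-1 - i))%N.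
Proof.
move=> I_ge3; have [N cardI] : exists N, #|I| = N.+3 by exists (#|I| - 3)%N; lia.
have [i_out|i_in] := boolP ((#|I|.-1 <= i)%N || (i == 0)%N).
  rewrite !nlevel_eq0 //; first by rewrite cardI; lia.
  by move: i_out; rewrite cardI; lia.
have [j ij jN] : exists2 j, i = j.+1 & (j <= N)%N.
  by exists i.-1; move: i_in; rewrite cardI; lia.
rewrite ij cardI /= subSS (_ : (N.+1 - j = (N - j).+1)%N); last by lia.
by rewrite nlevel_moment_sym // -subSn // mulnA.
Qed.

End CircleCounts.

Lemma exists_height_inj (R : realType) (I : finType) (P : I -> (R * R)%type) :
  injective P -> exists s : R, injective (height P s).
Proof.
move=> P_inj.
pose slope (ij : I * I) := ((P ij.1).2 - (P ij.2).2) / ((P ij.2).1 - (P ij.1).1).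
exists (1 + \sum_(ij : I * I) `|slope ij|) => i j; rewrite /height => e; apply: P_inj.
have [e1|dx] := eqVneq ((P j).1 - (P i).1) 0.
  move/eqP: e1; rewrite subr_eq0 => /eqP e1; move: e; rewrite e1 => /addIr e2.
  by rewrite [P i]surjective_pairing [P j]surjective_pairing e1 e2.
have slope_ij : 1 + \sum_(ij : I * I) `|slope ij| = slope (i, j).
  rewrite /slope /=; apply: (mulIf dx); rewrite mulfVK //.
  by move: e; rewrite mulrBr; set t := 1 + _; lra.
have slope_le : `|slope (i, j)| <= \sum_(ij : I * I) `|slope ij|.
  by rewrite (bigD1 (i, j)) //= ; apply: ler_wpDr => //; apply: sumr_ge0.
by exfalso; have := ler_norm (slope (i, j)); lra.
Qed.

Section GeneralPosition.
Variable R : realType.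
Variables (n : nat) (P : 'I_n -> (R * R)%type).
Hypothesis P_inj : injective P.
Hypothesis P_gp : general_position P.

Lemma general_position_noncollinear i j l : i != j -> i != l -> j != l ->
  orient (P i) (P j) (P l) != 0.
Proof.
move=> ij il jl; apply/eqP => o0; case: P_gp => [noncol _].
apply: (noncol i j l); first by rewrite /= !inE negb_or ij il jl.
have Pij : P i != P j by rewrite (inj_eq P_inj).
pose u := (P j).2 - (P i).2; pose v := - ((P j).1 - (P i).1).
exists u, v, (u * (P i).1 + v * (P i).2); split.
  have [u0|] := eqVneq u 0; last by left.
  right; rewrite oppr_eq0; apply: contra Pij; rewrite subr_eq0 => /eqP e1.
  move/eqP: u0; rewrite subr_eq0 => /eqP e2.
  by rewrite [P i]surjective_pairing [P j]surjective_pairing e1 e2.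
split; rewrite /u /v; [by [] | ring |].
by move: o0; rewrite /orient => o0; apply/eqP; rewrite -subr_eq0 -oppr_eq0 -o0; apply/eqP; ring.
Qed.

Lemma general_position_noncocircular i j l m :
  i != j -> i != l -> j != l -> m != i -> m != j -> m != l ->
  dist2 (P m) (circumcenter (P i) (P j) (P l)) != dist2 (P i) (circumcenter (P i) (P j) (P l)).
Proof.
move=> ij il jl mi mj ml; apply/eqP => e; case: P_gp => [_ noncoc].
apply: (noncoc i j l m); first by rewrite /= !inE !negb_or ij il jl !(eq_sym _ m) mi mj ml.
have [eb ec] := dist2_circumcenter (general_position_noncollinear ij il jl).
exists (circumcenter (P i) (P j) (P l)), (dist (P i) (circumcenter (P i) (P j) (P l))).
by split; rewrite // !distE ?eb ?ec ?e.
Qed.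

End GeneralPosition.

Section VoronoiVertices.
Variable R : realType.
Notation pt := (R * R)%type.
Variables (n : nat) (P : 'I_n -> pt) (s : R).
Hypothesis P_inj : injective P.
Hypothesis P_gp : general_position P.
Hypothesis height_inj : injective (height P s).
Notation triple := ('I_n * ('I_n * 'I_n))%type.

Let noncollinear := general_position_noncollinear P_inj P_gp.
Let noncocircular := general_position_noncocircular P_inj P_gp.

Lemma regionE (A : {set 'I_n}) p : region P A p <->
  (forall i j, i \in A -> j \notin A -> dist2 (P i) p <= dist2 (P j) p).
Proof. by split => h i j iA jA; [rewrite -dist_le | rewrite /halfplane dist_le]; apply: h. Qed.

Lemma exists_mid_sorted (E : {set 'I_n}) : #|E| = 3%N ->
  exists2 x : triple, mid_sorted P s x & tri_set x = E.
Proof.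
move=> cardE3; pose le_height i j := height P s i <= height P s j.
pose t := sort le_height (enum E).
have t_perm : perm_eq t (enum E) by rewrite perm_sort.
have t_sorted : sorted le_height t by apply: sort_sorted => i j; apply: le_total.
have t_uniq : uniq t by rewrite (perm_uniq t_perm) enum_uniq.
have t_size : size t = 3%N by rewrite (perm_size t_perm) -cardE.
have t_mem z : (z \in t) = (z \in E) by rewrite (perm_mem t_perm) mem_enum.
move: t_sorted t_uniq t_size t_mem; clear t_perm; clearbody t.
case: t => [|c [|a [|b []]]] //= /and3P [ca ab _].
rewrite !inE !negb_or => /and3P [/andP [nca ncb] nab _] _ t_mem.
exists (a, (b, c)).
  by rewrite /mid_sorted /= !lt_neqAle [_ <= _]ca [_ <= _]ab !andbT !height_neq // eq_sym.
apply/setP => z; rewrite /tri_set !inE -t_mem !inE.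
by case: (z == a); case: (z == b); case: (z == c).
Qed.

Lemma mid_sorted_bounds (x : triple) z : mid_sorted P s x -> z \in tri_set x ->
  height P s x.2.2 <= height P s z <= height P s x.2.1.
Proof.
case/andP => h1 h2; rewrite /tri_set !inE => /orP [/orP [] |] /eqP ->;
  apply/andP; split; lra.
Qed.

Lemma mid_sorted_tri_set_inj (x y : triple) : mid_sorted P s x -> mid_sorted P s y ->
  tri_set x = tri_set y -> x = y.
Proof.
move=> x_sorted y_sorted exy.
have [x1 x21 x22] := tri_set_mem x; have [_ y21 y22] := tri_set_mem y.
rewrite -exy in y21 y22; rewrite exy in x21 x22.
have e22 : x.2.2 = y.2.2.
  apply: height_inj; apply: le_anti.
  have /andP [-> _] := mid_sorted_bounds x_sorted y22.
  by have /andP [-> _] := mid_sorted_bounds y_sorted x22.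
have e21 : x.2.1 = y.2.1.
  apply: height_inj; apply: le_anti.
  have /andP [_ ->] := mid_sorted_bounds y_sorted x21.
  by have /andP [_ ->] := mid_sorted_bounds x_sorted y21.
have [n1 n2 _] := mid_sorted_neq x_sorted.
move: x1; rewrite exy /tri_set !inE -e21 -e22 (negbTE n1) (negbTE n2) !orbF => /eqP e1.
by rewrite [x]surjective_pairing [x.2]surjective_pairing e1 e21 e22 -!surjective_pairing.
Qed.

Definition vertex_circle (k : nat) (x : triple) : bool :=
  mid_sorted P s x && (((#|inside P x|).+1 == k) || ((#|inside P x|).+2 == k)).

Lemma voronoi_vertex_of_subsets k (x : triple) (f : 'I_n -> {set 'I_n}) :
  mid_sorted P s x ->
  {in tri_set x, forall u, f u \subset tri_set x /\ (#|inside P x| + #|f u|)%N = k} ->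
  {in tri_set x &, injective f} -> voronoi_vertex P k (tri_center P x).
Proof.
move=> x_sorted f_sub f_inj; set T := tri_set x; set In := inside P x.
have disj (B : {set 'I_n}) : B \subset T -> [disjoint In & B].
  move=> sBT; apply: disjointWr sBT _.
  by rewrite disjoint_sym (disjoint_tri_set_inside noncollinear x_sorted).
have region_f u : u \in T -> region P (In :|: f u) (tri_center P x).
  move=> uT; have [sub _] := f_sub u uT; apply/regionE => i j.
  rewrite !in_setU negb_or => iIn /andP [jIn _]; apply: (@le_trans _ _ (tri_radius2 P x)).
    case/orP: iIn => [|/(subsetP sub) iT]; first by rewrite inE => /ltW.
    by rewrite (dist2_tri_center noncollinear x_sorted iT).
  by move: jIn; rewrite inE -leNgt.
have card_f u : u \in T -> #|In :|: f u| = k.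
  move=> uT; have [sub <-] := f_sub u uT.
  by rewrite cardsU (disjoint_setI0 (disj _ sub)) cards0 subn0.
have unionK (B : {set 'I_n}) : B \subset T -> (In :|: B) :\: In = B.
  by move=> sBT; rewrite setDUl setDv set0U; apply/setDidPl; rewrite disjoint_sym disj.
have neq_f u v : u \in T -> v \in T -> u != v -> In :|: f u != In :|: f v.
  move=> uT vT; apply: contra => /eqP e; apply/eqP/f_inj => //.
  have [su _] := f_sub u uT; have [sv _] := f_sub v vT.
  by rewrite -(unionK _ su) -(unionK _ sv) e.
have [n1 n2 n3] := mid_sorted_neq x_sorted.
have [xa xb xc] := tri_set_mem x.
exists (In :|: f x.1), (In :|: f x.2.1), (In :|: f x.2.2).
split; first by split; apply: card_f.
by split; split; first [exact: neq_f | exact: region_f].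
Qed.

Lemma voronoi_vertex_of_circle k x : vertex_circle k x -> voronoi_vertex P k (tri_center P x).
Proof.
case/andP => x_sorted /orP [] /eqP k_eq.
  apply: (voronoi_vertex_of_subsets (f := set1)) => // [u uT|u v _ _ /set1_inj //].
  by split; rewrite ?sub1set ?cards1 ?addn1.
apply: (voronoi_vertex_of_subsets (f := fun u => tri_set x :\ u)) => // [u uT|u v uT vT].
  split; first exact: subD1set.
  by move: (card_tri_set x_sorted); rewrite (cardsD1 u) uT add1n => -[->]; rewrite addn2.
by move=> /setP /(_ u); rewrite !in_setD1 eqxx uT /= andbT => /esym /negbFE /eqP.
Qed.

Definition ball p r : {set 'I_n} := [set i | dist2 (P i) p < r].
Definition sphere p r : {set 'I_n} := [set i | dist2 (P i) p == r].

Lemma region_swap (A B : {set 'I_n}) p : region P A p -> region P B p -> A != B ->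
  #|A| = #|B| -> exists x0 y0,
  [/\ x0 \in A, x0 \notin B, y0 \in B, y0 \notin A & dist2 (P x0) p = dist2 (P y0) p].
Proof.
move=> /regionE rA /regionE rB AB cAB.
have /subsetPn [x0 x0A x0B] : ~~ (A \subset B).
  by apply: contra AB => sAB; rewrite eqEcard sAB cAB leqnn.
have /subsetPn [y0 y0B y0A] : ~~ (B \subset A).
  by apply: contra AB => sBA; rewrite eq_sym eqEcard sBA cAB leqnn.
by exists x0, y0; split => //; apply: le_anti; rewrite (rA _ _ x0A y0A) (rB _ _ y0B x0B).
Qed.

Lemma region_ball_sphere (A : {set 'I_n}) p i j : region P A p -> i \in A -> j \notin A ->
  dist2 (P i) p = dist2 (P j) p ->
  A = ball p (dist2 (P i) p) :|: (A :&: sphere p (dist2 (P i) p)).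
Proof.
move=> /regionE rA iA jA eij; apply/setP => z; rewrite !inE.
have [zA|zA] := boolP (z \in A); rewrite /= ?orbF.
  by rewrite orbC -le_eqVlt eij rA.
by apply/esym/negbTE; rewrite -leNgt rA.
Qed.

Lemma card_sphere_le3 p r : (#|sphere p r| <= 3)%N.
Proof.
rewrite leqNgt cardE; case: P_gp => [_ noncoc].
have := enum_uniq (mem (sphere p r)); have := mem_enum (mem (sphere p r)).
case: (enum _) => [|e1 [|e2 [|e3 [|e4 t]]]] // on_sphere uniq_all.
have uniq_e : uniq [:: e1; e2; e3; e4].
  exact: subseq_uniq (prefix_subseq [:: e1; e2; e3; e4] t) uniq_all.
apply/negP => _; apply: (noncoc e1 e2 e3 e4 uniq_e).
have r_e e : e \in [:: e1, e2, e3, e4 & t] -> dist (P e) p = Num.sqrt r.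
  by rewrite on_sphere inE distE => /eqP ->.
by exists p, (Num.sqrt r); split; apply: r_e; rewrite !inE eqxx ?orbT.
Qed.

Lemma bin_ge3_le3 e m : (e <= 3)%N -> (3 <= 'C(e, m))%N -> e = 3%N /\ (m = 1%N \/ m = 2%N).
Proof. by case: e => [|[|[|[|e]]]] // _; case: m => [|[|[|[|m]]]]; auto. Qed.

Lemma voronoi_vertex_sphere k p : voronoi_vertex P k p ->
  exists r m, (3 <= 'C(#|sphere p r|, m))%N /\ (#|ball p r| + m)%N = k.
Proof.
move=> [A1 [A2 [A3 [[c1 c2 c3] [[d12 d13 d23] [r1 r2 r3]]]]]].
have [x0 [y0 [x0A1 x0A2 y0A2 y0A1 e0]]] := region_swap r1 r2 d12 (etrans c1 (esym c2)).
have [x1 [y1 [x1A1 x1A3 y1A3 y1A1 e1]]] := region_swap r1 r3 d13 (etrans c1 (esym c3)).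
set r := dist2 (P x0) p in e0.
have e1r : dist2 (P y1) p = r.
  move/regionE: r1 => r1; apply: le_anti; rewrite (r1 _ _ x0A1 y1A1) andbT.
  by rewrite -e1 e0 (r1 _ _ x1A1 y0A1).
have eA1 := region_ball_sphere r1 x0A1 y0A1 e0.
have eA2 := region_ball_sphere r2 y0A2 x0A2 (esym e0); rewrite -e0 in eA2.
have eA3 := region_ball_sphere r3 y1A3 x1A3 (esym e1); rewrite e1r in eA3.
set B := ball p r in eA1 eA2 eA3; set S := sphere p r in eA1 eA2 eA3.
have card_split (A : {set 'I_n}) : A = B :|: (A :&: S) -> #|A| = (#|B| + #|A :&: S|)%N.
  move=> eA; rewrite [in LHS]eA cardsU -[RHS]subn0; congr (_ - _)%N.
  apply/eqP; rewrite cards_eq0; apply/eqP/setP => z; rewrite !inE.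
  by apply/negP => /and3P [lt _ /eqP eq]; move: lt; rewrite eq ltxx.
have trace_neq (A A' : {set 'I_n}) : A = B :|: (A :&: S) -> A' = B :|: (A' :&: S) ->
    A != A' -> A :&: S != A' :&: S.
  by move=> eA eA'; apply: contra => /eqP e; rewrite eA eA' e.
exists r, #|A1 :&: S|; split; last by rewrite -card_split.
have cS (A : {set 'I_n}) : A = B :|: (A :&: S) -> #|A| = k -> #|A :&: S| = #|A1 :&: S|.
  by move=> eA cA; apply/eqP; rewrite -(eqn_add2l #|B|) -!card_split ?cA ?c1.
rewrite -cards_draws (@leq_trans #|[set A1 :&: S; A2 :&: S; A3 :&: S]|) //.
  have t12 := trace_neq _ _ eA1 eA2 d12; have t13 := trace_neq _ _ eA1 eA3 d13.
  have t23 := trace_neq _ _ eA2 eA3 d23.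
  by rewrite setUC cardsU1 cards2 !inE negb_or t12 eq_sym t13 eq_sym t23.
by apply/subset_leq_card/subsetP => T; rewrite !inE => /orP [/orP [] |] /eqP ->;
  rewrite subsetIr ?cS ?eqxx.
Qed.

Lemma circle_of_sphere p r : #|sphere p r| = 3%N ->
  exists2 x, mid_sorted P s x & tri_center P x = p /\ inside P x = ball p r.
Proof.
move=> /exists_mid_sorted [x x_sorted tx]; exists x => //.
have on_sphere z : z \in tri_set x -> dist2 (P z) p = r by rewrite tx inE => /eqP.
have [n1 n2 n3] := mid_sorted_neq x_sorted.
have [xa xb xc] := tri_set_mem x.
have center_x : tri_center P x = p.
  by apply/esym/circumcenter_unique; rewrite ?noncollinear ?on_sphere.
by split=> //; apply/setP => z; rewrite !inE /tri_radius2 center_x (on_sphere _ xa).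
Qed.

Lemma circle_of_voronoi_vertex k p : voronoi_vertex P k p ->
  exists2 x, vertex_circle k x & tri_center P x = p.
Proof.
move=> /voronoi_vertex_sphere [r [m [three k_eq]]].
have [cardS m12] := bin_ge3_le3 (card_sphere_le3 p r) three.
have [x x_sorted [center_x inside_x]] := circle_of_sphere cardS.
exists x => //; rewrite /vertex_circle x_sorted inside_x -k_eq.
by case: m12 => ->; rewrite ?addn1 ?addn2 eqxx ?orbT.
Qed.

Lemma inside_card_lt (x y : triple) : mid_sorted P s x -> tri_center P x = tri_center P y ->
  tri_radius2 P x < tri_radius2 P y -> (#|inside P x| + 3 <= #|inside P y|)%N.
Proof.
move=> x_sorted cxy lt; rewrite -(card_tri_set x_sorted).
have -> : (#|inside P x| + #|tri_set x|)%N = #|inside P x :|: tri_set x|.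
  rewrite cardsU setIC (disjoint_setI0 (disjoint_tri_set_inside noncollinear x_sorted)).
  by rewrite cards0 subn0.
apply/subset_leq_card/subsetP => z; rewrite in_setU => /orP [|zT]; rewrite !inE -cxy.
  by move=> /lt_trans; apply.
by rewrite (dist2_tri_center noncollinear x_sorted zT).
Qed.

Lemma vertex_circle_inj k x y : vertex_circle k x -> vertex_circle k y ->
  tri_center P x = tri_center P y -> x = y.
Proof.
move=> /andP [x_sorted kx] /andP [y_sorted ky] cxy.
have [lt|lt|eq] := ltgtP (tri_radius2 P x) (tri_radius2 P y).
- have := inside_card_lt x_sorted cxy lt.
  by move: kx ky => /orP [] /eqP kx /orP [] /eqP ky; lia.
- have := inside_card_lt y_sorted (esym cxy) lt.
  by move: kx ky => /orP [] /eqP kx /orP [] /eqP ky; lia.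
apply: mid_sorted_tri_set_inj => //; apply/eqP; rewrite eq_sym eqEcard.
rewrite (card_tri_set x_sorted) (card_tri_set y_sorted) leqnn andbT.
apply/subsetP => z zy; apply: contraT => zx.
have := dist2_tri_center_neq noncocircular x_sorted zx.
by rewrite eq cxy (dist2_tri_center noncollinear y_sorted zy) eqxx.
Qed.

Lemma num_vertices_circles k : num_vertices P k #|[set x | vertex_circle k x]|.
Proof.
exists (map (tri_center P) (enum [set x | vertex_circle k x])); split.
- rewrite map_inj_in_uniq ?enum_uniq // => x y; rewrite !mem_enum !inE.
  exact: vertex_circle_inj.
- by rewrite size_map -cardE.
move=> p; split.
  by move=> /mapP [x]; rewrite mem_enum inE => kx ->; apply: voronoi_vertex_of_circle.
by move=> /circle_of_voronoi_vertex [x kx <-]; apply: map_f; rewrite mem_enum inE.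
Qed.

Lemma card_vertex_circles k :
  #|[set x | vertex_circle k x]| = (nlevel P s k + nlevel P s k.-1)%N.
Proof.
have -> : [set x | vertex_circle k x] =
    [set x | mid_sorted P s x & (#|inside P x|).+1 == k] :|:
    [set x | mid_sorted P s x & (#|inside P x|).+1 == k.-1].
  apply/setP => x; rewrite !inE /vertex_circle.
  by case: (mid_sorted P s x) => //=; case: k.
rewrite cardsU -[RHS]subn0; congr (_ - _)%N.
apply/eqP; rewrite cards_eq0; apply/eqP/setP => x; rewrite !inE.
by apply/negP => /andP [/andP [_ /eqP e1] /andP [_ /eqP e2]]; lia.
Qed.

End VoronoiVertices.

Local Close Scope ring_scope.

Theorem mainTheorem4 (R : realType) (n : nat) (P : 'I_n -> (R * R)%type)
  (HPinj : injective P) (Hn : 3 <= n) (Hgp : general_position P)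
  (k : nat) (Hk1 : 1 <= k) (Hk2 : k <= n - 1) :
  exists vk vnk : nat,
    [/\ num_vertices P k vk, num_vertices P (n - k) vnk &
        vk + vnk + 2 * n = 4 * k * (n - k)].
Proof.
have [s height_inj] := exists_height_inj HPinj.
have nv := num_vertices_circles HPinj Hgp height_inj.
exists #|[set x | vertex_circle P s k x]|, #|[set x | vertex_circle P s (n - k) x]|.
split=> //; rewrite !card_vertex_circles.
have := nlevel_sym HPinj (general_position_noncollinear HPinj Hgp)
  (general_position_noncocircular HPinj Hgp) height_inj.
rewrite card_ord => sym; have := sym k Hn; have := sym k.-1 Hn.
rewrite (_ : (n.-1 - k.-1 = n - k)%N); last by lia.
rewrite (_ : (n.-1 - k = (n - k).-1)%N); last by lia.
move: (nlevel P s k) (nlevel P s k.-1) (nlevel P s (n - k)) (nlevel P s (n - k).-1) => a b c d.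
have [l ->] : exists l, n = (k + l.+1)%N by exists (n - k).-1; lia.
have [j ek] : exists j, k = j.+1 by exists k.-1; lia.
rewrite addKn ek /=; nia.
Qed.
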